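(* Let $\mathcal{Q}\subseteq\mathbb{R}^n$ be a configuration manifold and consider the robotic system $$\mathbf{D}(\mathbf{q})\ddot{\mathbf{q}}+\mathbf{C}(\mathbf{q},\dot{\mathbf{q}})\dot{\mathbf{q}}+\mathbf{G}(\mathbf{q})=\mathbf{B}\mathbf{u},\qquad \mathbf{u}\in\mathbb{R}^m,$$ written in control affine form $\dot{\mathbf{x}}=\mathbf{f}(\mathbf{x})+\mathbf{g}(\mathbf{x})\mathbf{u}$ with $\mathbf{x}=(\mathbf{q},\dot{\mathbf{q}})\in T\mathcal{Q}$, $$\mathbf{f}(\mathbf{x})=\begin{bmatrix}\dot{\mathbf{q}}\\ -\mathbf{D}(\mathbf{q})^{-1}\big(\mathbf{C}(\mathbf{q},\dot{\mathbf{q}})\dot{\mathbf{q}}+\mathbf{G}(\mathbf{q})\big)\end{bmatrix},\qquad \mathbf{g}(\mathbf{x})=\begin{bmatrix}\mathbf{0}\\ \mathbf{D}(\mathbf{q})^{-1}\mathbf{B}\end{bmatrix}.$$ Let $h_0:\mathcal{Q}\to\mathbb{R}$ be continuously differentiable, defining $\mathcal{C}_0=\{\mathbf{q}\in\mathcal{Q}: h_0(\mathbf{q})\ge 0\}$, and suppose there exist a continuously differentiable $\mathbf{k}_0:\mathcal{Q}\to\mathbb{R}^n$ and an extended class $\mathcal{K}_\infty$ function $\alpha$ such that $\nabla h_0(\mathbf{q})\cdot\mathbf{k}_0(\mathbf{q})>-\alpha(h_0(\mathbf{q}))$ for all $\mathbf{q}\in\mathcal{Q}$. Fix $\mu>0$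 and define $$h(\mathbf{q},\dot{\mathbf{q}})=h_0(\mathbf{q})-\frac{1}{2\mu}(\dot{\mathbf{q}}-\mathbf{k}_0(\mathbf{q}))^\top\mathbf{D}(\mathbf{q})(\dot{\mathbf{q}}-\mathbf{k}_0(\mathbf{q})),\qquad \mathcal{C}=\{(\mathbf{q},\dot{\mathbf{q}})\in T\mathcal{Q}: h(\mathbf{q},\dot{\mathbf{q}})\ge0\}.$$ If the system is fully actuated ($m=n$ and $\mathbf{B}$ invertible), then $h$ is a control barrier function for the control affine system $\dot{\mathbf{x}}=\mathbf{f}(\mathbf{x})+\mathbf{g}(\mathbf{x})\mathbf{u}$ on $\mathcal{C}$.
   Context: $\mathbf{D}(\mathbf{q})\in\mathbb{R}^{n\times n}$ is the positive definite inertia matrix (assumed continuously differentiable in $\mathbf{q}$), $\mathbf{C}$ the Coriolis matrix, $\mathbf{G}$ the gravity/potential term, $\mathbf{B}\in\mathbb{R}^{n\times m}$ the actuation matrix. A continuous function $\alpha:\mathbb{R}\to\mathbb{R}$ is extended class $\mathcal{K}_\infty$ if $\alpha(0)=0$, $\alpha$ is strictly increasing and $\lim_{s\to\pm\infty}\alpha(s)=\pm\infty$. For a scalar $h$, $L_{\mathbf{f}}h(\mathbf{x})=\nabla h(\mathbf{x})\cdot\mathbf{f}(\mathbf{x})$ and $L_{\mathbf{g}}h(\mathbf{x})=\nabla h(\mathbf{x})^\top\mathbf{g}(\mathbf{x})$. A continuously differentiable $h$ defining $\mathcal{C}=\{h\ge0\}$ is a control barrier function (CBF) for $\dot{\mathbf{x}}=\mathbf{f}(\mathbf{x})+\mathbf{g}(\mathbf{x})\mathbf{u}$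 on $\mathcal{C}$ if there exists an extended class $\mathcal{K}_\infty$ function $\alpha$ such that for all states $\mathbf{x}$: $\sup_{\mathbf{u}\in\mathbb{R}^m}\{L_{\mathbf{f}}h(\mathbf{x})+L_{\mathbf{g}}h(\mathbf{x})\mathbf{u}\}>-\alpha(h(\mathbf{x}))$. *)

From HB Require Import structures.
From mathcomp Require Import all_boot all_order all_algebra.
From mathcomp Require Import all_classical all_reals all_analysis.
Set Implicit Arguments. Unset Strict Implicit. Unset Printing Implicit Defensive.
Import Order.TTheory GRing.Theory Num.Theory.
Import numFieldNormedType.Exports.
Local Open Scope classical_set_scope.
Local Open Scope ring_scope.

Definition ext_class_Kinf (R : realType) (alpha : R -> R) : Prop :=
  continuous alpha /\ alpha 0 = 0 /\ {homo alpha : x y / x < y} /\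
  (alpha @ +oo --> +oo) /\ (alpha @ -oo --> -oo).

(** continuously differentiable on an (open) set A: differentiable at every
    point of A, with every directional derivative x |-> df(x) v continuous at
    every point of A (equivalent to C^1 in finite dimension). *)
Definition C1_on (R : realType) (U V : normedModType R) (A : set U) (F : U -> V)
  : Prop :=
  (forall x, A x -> differentiable F x) /\
  (forall v x, A x -> (fun y => 'd F y v) @ x --> 'd F x v).

Definition Lie_f (R : realType) (N : nat) (h : 'cV[R]_N -> R)
  (f : 'cV[R]_N -> 'cV[R]_N) (x : 'cV[R]_N) : R := 'd h x (f x).

Definition Lie_g (R : realType) (N m : nat) (h : 'cV[R]_N -> R)
  (g : 'cV[R]_N -> 'M[R]_(N, m)) (x : 'cV[R]_N) : 'rV[R]_m :=
  \row_j 'd h x (col j (g x)).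

(** control barrier function for xdot = f(x) + g(x) u on the state space X
    (the safe set being C = {x in X | h x >= 0}). The supremum is taken in
    the extended reals (it may be +oo). *)
Definition is_CBF (R : realType) (N m : nat) (f : 'cV[R]_N -> 'cV[R]_N)
  (g : 'cV[R]_N -> 'M[R]_(N, m)) (X : set 'cV[R]_N) (h : 'cV[R]_N -> R) : Prop :=
  C1_on X h /\
  exists alpha : R -> R, ext_class_Kinf alpha /\
    forall x, X x ->
      ((- alpha (h x))%:E <
       ereal_sup [set (Lie_f h f x + (Lie_g h g x *m u) 0 0)%:E | u in [set: 'cV[R]_m]])%E.

(** Robotic system in control-affine form, state x = (q, qdot) = col_mx q qdot *)
Section Robot.
Context (R : realType) (n m : nat).
Variables (D : 'cV[R]_n -> 'M[R]_n) (C : 'cV[R]_n -> 'cV[R]_n -> 'M[R]_n)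
  (G : 'cV[R]_n -> 'cV[R]_n) (B : 'M[R]_(n, m)).

Definition robot_f (x : 'cV[R]_(n + n)) : 'cV[R]_(n + n) :=
  let q := usubmx x in let qd := dsubmx x in
  col_mx qd (- (invmx (D q) *m (C q qd *m qd + G q))).

Definition robot_g (x : 'cV[R]_(n + n)) : 'M[R]_(n + n, m) :=
  col_mx 0 (invmx (D (usubmx x)) *m B).
End Robot.

Definition robot_h (R : realType) (n : nat) (D : 'cV[R]_n -> 'M[R]_n)
  (h0 : 'cV[R]_n -> R) (k0 : 'cV[R]_n -> 'cV[R]_n) (mu : R)
  (x : 'cV[R]_(n + n)) : R :=
  let q := usubmx x in let e := dsubmx x - k0 q in
  h0 q - (2 * mu)^-1 * ((e^T *m D q *m e) 0 0).

Definition tangent_set (R : realType) (n : nat) (Q : set 'cV[R]_n)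
  : set 'cV[R]_(n + n) := [set x | Q (usubmx x)].

From HB Require Import structures.
From mathcomp Require Import all_boot all_order all_algebra.
From mathcomp Require Import all_classical all_reals all_analysis.
From mathcomp Require Import ring lra.
Import Order.TTheory GRing.Theory Num.Theory.
Import numFieldNormedType.Exports.
Local Open Scope classical_set_scope.
Local Open Scope ring_scope.

(* Write e = qdot - k0(q), so that h = h0(q) - (1/2mu) e^T D(q) e.  Moving only the
   velocity, in direction (0, w), changes h at rate -(1/2mu)(w^T D e + e^T D w), and
   under full actuation every w = D^-1 B u is available.  If e <> 0, the choice
   w = -e gives L_g h u = (1/mu) e^T D e > 0, so the supremum over u is +oo.  If
   e = 0, the quadratic term vanishes to second order, hence h = h0 and
   L_f h = grad h0 . qdot = grad h0 . k0 > -alpha(h0) = -alpha(h), attained at u = 0. *)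

(* [C1_on] with the differential made explicit, so that it can be computed by the
   rules below. *)
Definition is_C1_on {R : realType} {U V : normedModType R}
    (A : set U) (f : U -> V) (df : U -> U -> V) : Prop :=
  (forall x, A x -> differentiable f x /\ 'd f x = df x :> (U -> V)) /\
  (forall v x, A x -> (fun y => df y v) @ x --> df x v).

Section C1Calculus.
Context {R : realType} {U V W : normedModType R}.
Implicit Types (A : set U) (f g : U -> V) (df dg : U -> U -> V).

Lemma is_C1_of_C1_on {A f} : C1_on A f -> is_C1_on A f (fun x v => 'd f x v).
Proof. by move=> [df cdf]; split=> // x Ax; split; first exact: df. Qed.

Lemma C1_on_of_is_C1 {A f df} : open A -> is_C1_on A f df -> C1_on A f.
Proof.
move=> Aopen [fdf dfcvg]; split=> [x /fdf[]//|v x Ax].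
have /fdf[_ ->] := Ax; apply: cvg_trans (dfcvg v x Ax); apply: near_eq_cvg.
have : nbhs x A by move: Aopen; rewrite openE; apply.
by apply: filterS => y /fdf[_ ->].
Qed.

Lemma is_C1_cst A (c : V) : is_C1_on A (fun _ => c) (fun _ _ => 0).
Proof.
split=> [x _|v x _]; last exact: cvg_cst.
by split; [exact: differentiable_cst | exact: diff_cst].
Qed.

Lemma is_C1_add {A f g df dg} : is_C1_on A f df -> is_C1_on A g dg ->
  is_C1_on A (fun x => f x + g x) (fun x v => df x v + dg x v).
Proof.
move=> [fdf dfcvg] [gdg dgcvg]; split=> [x Ax|v x Ax].
  have [fx <-] := fdf x Ax; have [gx <-] := gdg x Ax.
  by split; [exact: differentiableD | exact: diffD fx gx].
exact: cvgD (dfcvg v x Ax) (dgcvg v x Ax).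
Qed.

Lemma is_C1_sub {A f g df dg} : is_C1_on A f df -> is_C1_on A g dg ->
  is_C1_on A (fun x => f x - g x) (fun x v => df x v - dg x v).
Proof.
move=> [fdf dfcvg] [gdg dgcvg]; split=> [x Ax|v x Ax].
  have [fx <-] := fdf x Ax; have [gx <-] := gdg x Ax.
  by split; [exact: differentiableB | exact: diffB fx gx].
exact: cvgB (dfcvg v x Ax) (dgcvg v x Ax).
Qed.

Lemma is_C1_scale (k : R) {A f df} : is_C1_on A f df ->
  is_C1_on A (fun x => k *: f x) (fun x v => k *: df x v).
Proof.
move=> [fdf dfcvg]; split=> [x Ax|v x Ax].
  by have [fx <-] := fdf x Ax; split; [exact: differentiableZ | exact: diffZ fx].
exact: cvgZ (cvg_cst k) (dfcvg v x Ax).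
Qed.

Lemma is_C1_sum {A k} {F : 'I_k -> U -> V} {dF} :
  (forall i, is_C1_on A (F i) (dF i)) ->
  is_C1_on A (fun x => \sum_(i < k) F i x) (fun x v => \sum_(i < k) dF i x v).
Proof.
move=> FdF; rewrite -fct_sumE.
have -> : (fun x v => \sum_(i < k) dF i x v) = \sum_(i < k) dF i.
  by rewrite fct_sumE; apply/funext => x; rewrite fct_sumE.
apply: (big_rec2 (fun f df => is_C1_on A f df)) => [|i f df _ fdf].
  exact: is_C1_cst.
exact: is_C1_add.
Qed.

Lemma is_C1_lin A (L : {linear U -> V}) : continuous L ->
  is_C1_on A L (fun _ v => L v).
Proof.
move=> Lcont; split=> [x _|v x _]; last exact: cvg_cst.
by split; [exact: linear_differentiable | exact: diff_lin].
Qed.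

Lemma is_C1_precomp_lin (L : {linear W -> U}) {A f df} :
  continuous L -> is_C1_on A f df ->
  is_C1_on (L @^-1` A) (fun x => f (L x)) (fun x v => df (L x) (L v)).
Proof.
move=> Lcont [fdf dfcvg]; split=> [x /fdf[fLx dfLx]|v x /(dfcvg (L v))].
  have Lx := linear_differentiable x Lcont.
  split; first exact: differentiable_comp.
  by rewrite (diff_comp Lx fLx) dfLx diff_lin.
by apply: continuous_comp; exact: Lcont.
Qed.

Lemma is_C1_postcomp_lin (L : {linear V -> W}) {A f df} :
  continuous L -> is_C1_on A f df ->
  is_C1_on A (fun x => L (f x)) (fun x v => L (df x v)).
Proof.
move=> Lcont [fdf dfcvg]; split=> [x /fdf[fx dfx]|v x /(dfcvg v) dfv].
  have Lfx := linear_differentiable (f x) Lcont.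
  split; first exact: differentiable_comp.
  by rewrite (diff_comp fx Lfx) dfx diff_lin.
exact: (continuous_comp dfv (Lcont _)).
Qed.

Lemma is_C1_mul {A} {f g : U -> R} {df dg : U -> U -> R} :
  is_C1_on A f df -> is_C1_on A g dg ->
  is_C1_on A (fun x => f x * g x) (fun x v => f x * dg x v + g x * df x v).
Proof.
move=> [fdf dfcvg] [gdg dgcvg]; split=> [x Ax|v x Ax].
  have [fx <-] := fdf x Ax; have [gx <-] := gdg x Ax.
  by split; [exact: differentiableM | exact: diffM fx gx].
have [/differentiable_continuous fc _] := fdf x Ax.
have [/differentiable_continuous gc _] := gdg x Ax.
exact: cvgD (cvgM fc (dgcvg v x Ax)) (cvgM gc (dfcvg v x Ax)).
Qed.

End C1Calculus.

Section MatrixC1.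
Context {R : realType} {U : normedModType R}.

Lemma continuous_usubmx m1 m2 k :
  continuous (usubmx : 'M[R]_(m1 + m2, k) -> 'M[R]_(m1, k)).
Proof.
move=> x A /nbhs_ballP[e /= e0 eA]; apply/nbhs_ballP; exists e => //= y [_ xy].
by apply: eA; split => // i j; rewrite !mxE; exact: xy.
Qed.

Lemma continuous_dsubmx m1 m2 k :
  continuous (dsubmx : 'M[R]_(m1 + m2, k) -> 'M[R]_(m2, k)).
Proof.
move=> x A /nbhs_ballP[e /= e0 eA]; apply/nbhs_ballP; exists e => //= y [_ xy].
by apply: eA; split => // i j; rewrite !mxE; exact: xy.
Qed.

Lemma is_C1_entry {a b} (i : 'I_a) (j : 'I_b) {A} {f : U -> 'M[R]_(a, b)} {df} :
  is_C1_on A f df -> is_C1_on A (fun x => f x i j) (fun x v => df x v i j).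
Proof.
have @L : {linear 'M[R]_(a, b) -> R}.
  by exists (fun N : 'M[R]_(_, _) => N i j); do 2![eexists]; do ?[constructor];
     rewrite ?mxE// => ? *; rewrite ?mxE//; move=> ?; rewrite !mxE.
by move=> fdf; apply: (is_C1_postcomp_lin L _ fdf); exact: coord_continuous.
Qed.

Lemma mx_bilin_sum k (a b : 'cV[R]_k) (M : 'M[R]_k) :
  (a^T *m M *m b) 0 0 = \sum_(j < k) \sum_(i < k) a i 0 * (M i j * b j 0).
Proof.
rewrite mxE; apply: eq_bigr => j _; rewrite mxE mulr_suml.
by apply: eq_bigr => i _; rewrite !mxE mulrA.
Qed.

Lemma is_C1_quad {k A} {e : U -> 'cV[R]_k} {de} {M : U -> 'M[R]_k} {dM} :
  is_C1_on A e de -> is_C1_on A M dM ->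
  is_C1_on A (fun x => ((e x)^T *m M x *m e x) 0 0)
    (fun x v => ((de x v)^T *m M x *m e x) 0 0 + ((e x)^T *m dM x v *m e x) 0 0
                + ((e x)^T *m M x *m de x v) 0 0).
Proof.
move=> ede MdM.
have ei i := is_C1_entry i 0 ede; have Mij i j := is_C1_entry i j MdM.
have := is_C1_sum (fun j => is_C1_sum (fun i =>
  is_C1_mul (ei i) (is_C1_mul (Mij i j) (ei j)))).
congr is_C1_on; apply/funext => x; first by rewrite mx_bilin_sum.
apply/funext => v; rewrite !mx_bilin_sum -!big_split; apply: eq_bigr => j _.
by rewrite -!big_split; apply: eq_bigr => i _ /=; ring.
Qed.

End MatrixC1.

Lemma Lie_g_mul {R : realType} N m (h : 'cV[R]_N -> R)
  (g : 'cV[R]_N -> 'M[R]_(N, m)) x (u : 'cV[R]_m) :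
  (Lie_g h g x *m u) 0 0 = 'd h x (g x *m u).
Proof.
have -> : g x *m u = \sum_j u j 0 *: col j (g x).
  apply/matrixP => i k; rewrite !mxE summxE; apply: eq_bigr => j _.
  by rewrite !mxE (ord1 k) mulrC.
rewrite linear_sum mxE; apply: eq_bigr => j _.
by rewrite linearZ /= mxE mulrC.
Qed.

Lemma ereal_sup_affine_gt {R : realType} {m : nat} (a c : R) (b : 'rV[R]_m)
  (u0 : 'cV[R]_m) : 0 < (b *m u0) 0 0 ->
  (c%:E < ereal_sup [set (a + (b *m u) 0 0)%:E | u in [set: 'cV[R]_m]])%E.
Proof.
move=> bu0_gt0; set t := (`|a| + `|c| + 1) / (b *m u0) 0 0.
apply: (@lt_le_trans _ _ (a + (b *m (t *: u0)) 0 0)%:E); last first.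
  by apply: ereal_sup_ubound; exists (t *: u0).
rewrite lte_fin -scalemxAr mxE /t divfK ?gt_eqF //.
have := ler_norm (- a); have := ler_norm c; rewrite normrN; lra.
Qed.

Lemma posdef_unitmx {R : numFieldType} n (M : 'M[R]_n) :
  (forall v : 'cV[R]_n, v != 0 -> 0 < (v^T *m M *m v) 0 0) -> M \in unitmx.
Proof.
move=> Mpd; rewrite unitmxE unitfE; apply/det0P => -[v v_neq0 vM].
have : v^T != 0 by apply: contra v_neq0 => /eqP vT0; rewrite -[v]trmxK vT0 trmx0.
by move=> /Mpd; rewrite trmxK vM mul0mx mxE ltxx.
Qed.

Lemma open_tangent_set {R : realType} n (Q : set 'cV[R]_n) :
  open Q -> open (tangent_set Q).
Proof. by move=> Qopen; apply: open_comp => // x _; exact: continuous_usubmx. Qed.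

Section RobotBarrier.
Context {R : realType} {n : nat} {Q : set 'cV[R]_n} {D : 'cV[R]_n -> 'M[R]_n}
  {h0 : 'cV[R]_n -> R} {k0 : 'cV[R]_n -> 'cV[R]_n} {mu : R}.
Hypotheses (D_C1 : C1_on Q D) (h0_C1 : C1_on Q h0) (k0_C1 : C1_on Q k0).
Local Notation h := (robot_h D h0 k0 mu).

Lemma is_C1_robot_h : is_C1_on (tangent_set Q) h
  (fun x v => let q := usubmx x in let e := dsubmx x - k0 q in
     let de := dsubmx v - 'd k0 q (usubmx v) in
     'd h0 q (usubmx v) - (2 * mu)^-1 * ((de^T *m D q *m e) 0 0
       + (e^T *m 'd D q (usubmx v) *m e) 0 0 + (e^T *m D q *m de) 0 0)).
Proof.
have usub_cont := @continuous_usubmx R n n 1.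
have pos_C1 F := is_C1_precomp_lin usubmx usub_cont (is_C1_of_C1_on F).
have e_C1 := is_C1_sub
  (is_C1_lin (tangent_set Q) dsubmx (@continuous_dsubmx R n n 1)) (pos_C1 _ _ _ k0_C1).
exact: is_C1_sub (pos_C1 _ _ _ h0_C1)
  (is_C1_scale _ (is_C1_quad e_C1 (pos_C1 _ _ _ D_C1))).
Qed.

Lemma C1_on_robot_h : open Q -> C1_on (tangent_set Q) h.
Proof. by move=> /open_tangent_set /C1_on_of_is_C1; apply; exact: is_C1_robot_h. Qed.

Lemma diff_robot_h_vel x w : tangent_set Q x ->
  let q := usubmx x in let e := dsubmx x - k0 q in
  'd h x (col_mx 0 w) =
    - (2 * mu)^-1 * ((w^T *m D q *m e) 0 0 + (e^T *m D q *m w) 0 0).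
Proof.
move=> Tx; have [/(_ x Tx)[_ ->] _] := is_C1_robot_h.
rewrite /= col_mxKu col_mxKd (linear0 ('d k0 _)) (linear0 ('d h0 _)).
rewrite (linear0 ('d D _)) subr0.
by rewrite mulmx0 mul0mx !mxE; ring.
Qed.

Lemma diff_robot_h_opp_err x : tangent_set Q x ->
  let q := usubmx x in let e := dsubmx x - k0 q in
  'd h x (col_mx 0 (- e)) = mu^-1 * (e^T *m D q *m e) 0 0.
Proof.
move=> Tx /=; rewrite diff_robot_h_vel // linearN /= !mulNmx mulmxN.
set s := _ *m _ *m _; rewrite [(- s) 0 0]mxE -opprD mulrNN invfM.
by rewrite [RHS]splitr; ring.
Qed.

Lemma diff_robot_h_rest x v : tangent_set Q x -> dsubmx x = k0 (usubmx x) ->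
  'd h x v = 'd h0 (usubmx x) (usubmx v).
Proof.
move=> Tx rest; have [/(_ x Tx)[_ ->] _] := is_C1_robot_h.
by rewrite /= rest subrr trmx0 !mul0mx !mulmx0 !mxE !addr0 mulr0 subr0.
Qed.

Lemma robot_h_rest x : dsubmx x = k0 (usubmx x) -> h x = h0 (usubmx x).
Proof. by move=> rest; rewrite /robot_h /= rest subrr mulmx0 mxE mulr0 subr0. Qed.

End RobotBarrier.

Lemma Lie_g_robot_g {R : realType} n m (D : 'cV[R]_n -> 'M[R]_n)
  (B : 'M[R]_(n, m)) (h : 'cV[R]_(n + n) -> R) x u :
  (Lie_g h (robot_g D B) x *m u) 0 0 =
    'd h x (col_mx 0 (invmx (D (usubmx x)) *m B *m u)).
Proof. by rewrite Lie_g_mul mul_col_mx mul0mx. Qed.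

Theorem lemma4 (R : realType) (n : nat) (Q : set 'cV[R]_n)
  (D : 'cV[R]_n -> 'M[R]_n) (C : 'cV[R]_n -> 'cV[R]_n -> 'M[R]_n)
  (G : 'cV[R]_n -> 'cV[R]_n) (B : 'M[R]_n)
  (h0 : 'cV[R]_n -> R) (k0 : 'cV[R]_n -> 'cV[R]_n) (mu : R) :
  open Q ->
  (* D positive definite and continuously differentiable on Q *)
  (forall q, Q q -> forall v : 'cV[R]_n, v != 0 -> 0 < (v^T *m D q *m v) 0 0) ->
  C1_on Q D ->
  C1_on Q h0 ->
  C1_on Q k0 ->
  (exists alpha : R -> R, ext_class_Kinf alpha /\
     forall q, Q q -> - alpha (h0 q) < 'd h0 q (k0 q)) ->
  0 < mu ->
  (* full actuation: m = n and B invertible *)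
  B \in unitmx ->
  is_CBF (robot_f D C G) (robot_g D B) (tangent_set Q) (robot_h D h0 k0 mu).
Proof.
move=> Qopen D_pd D_C1 h0_C1 k0_C1 [alpha [alpha_Kinf h0_barrier]] mu_gt0 B_unit.
split; first exact: C1_on_robot_h.
exists alpha; split=> // x Tx.
set h := robot_h D h0 k0 mu; set q := usubmx x; set e := dsubmx x - k0 q.
have [e0|e_neq0] := eqVneq e 0.
  have rest : dsubmx x = k0 q by apply/eqP; rewrite -subr_eq0 -/e e0.
  apply: (@lt_le_trans _ _ (Lie_f h (robot_f D C G) x
    + (Lie_g h (robot_g D B) x *m 0) 0 0)%:E); last first.
    by apply: ereal_sup_ubound; exists 0.
  rewrite lte_fin mulmx0 mxE addr0 /Lie_f (diff_robot_h_rest D_C1 h0_C1 k0_C1) //.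
  by rewrite /h robot_h_rest // col_mxKu rest; exact: h0_barrier.
apply: (ereal_sup_affine_gt _ _ _ (invmx B *m (D q *m - e))).
rewrite Lie_g_robot_g -/q -!mulmxA mulKVmx // mulKmx; last first.
  exact: posdef_unitmx (D_pd q Tx).
rewrite (diff_robot_h_opp_err D_C1 h0_C1 k0_C1) // mulr_gt0 ?invr_gt0 //.
exact: D_pd.
Qed.
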